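(* Let $\mathcal{P}$ be a poset and $S\subseteq\mathcal{P}$ a finitely presented convex set. Then $\min S$ and $\operatorname{cover}S$ are finite, and $S=\uparrow\min S\setminus\uparrow\operatorname{cover}S$.
   Context: Fix a field $\mathbb{k}$. $\uparrow X=\{p:\exists x\in X,x\le p\}$; $\operatorname{cover}X=\min(\uparrow X\setminus X)$. $S$ is convex if $s\le p\le s'$ with $s,s'\in S$ implies $p\in S$. $\mathbb{k}_S$ is the indicator representation ($\mathbb{k}$ on $S$, $0$ elsewhere, identity maps within $S$). $S$ is finitely presented if $\mathbb{k}_S$ is the cokernel of a morphism between finite direct sums of representations $\mathbb{k}_{\uparrow\{p\}}$, $p\in\mathcal{P}$. *)

From HB Require Import structures.
From mathcomp Require Import all_boot all_order all_algebra.
From mathcomp Require Import boolp classical_sets cardinality.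
Unset Implicit Arguments. Unset Printing Implicit Defensive.
Import Order.Theory GRing.Theory.
Local Open Scope classical_set_scope.
Local Open Scope ring_scope.

Section PosetReps.
Variables (k : fieldType) (d : Order.disp_t) (P : porderType d).

Definition pupset (X : set P) : set P :=
  [set p | exists2 x, X x & (x <= p)%O].
Definition pminset (X : set P) : set P :=
  [set x | X x /\ forall y, X y -> (y <= x)%O -> y = x].
Definition pcoverset (X : set P) : set P := pminset (pupset X `\` X).
Definition pconvex (S : set P) : Prop :=
  forall s s' p, S s -> S s' -> (s <= p)%O -> (p <= s')%O -> S p.

(* The direct sum  (+)_{i < size a} k_{up a_i}  is realised at the point p
   as the subspace of k^(size a) (row vectors) of vectors supported on the
   indices i with a_i <= p; its structure maps are the inclusions. *)
Definition fsupp (a : seq P) (p : P) (v : 'rV[k]_(size a)) : Prop :=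
  forall i : 'I_(size a), ~~ (nth p a i <= p)%O -> v 0 i = 0.

(* A morphism (+)_i k_{up a_i} -> (+)_j k_{up b_j}: a family of linear maps
   (given by matrices, acting on the right) preserving the subspaces and
   natural w.r.t. the (inclusion) structure maps. *)
Definition free_morph (a b : seq P) (f : P -> 'M[k]_(size a, size b)) : Prop :=
  (forall p v, fsupp a p v -> fsupp b p (v *m f p)) /\
  (forall p q v, (p <= q)%O -> fsupp a p v -> v *m f q = v *m f p).

(* A morphism (+)_j k_{up b_j} -> k_S, where k_S is k on S (identity maps)
   and 0 elsewhere; the component at p is pi p (only meaningful for p in S). *)
Definition morph_to_ind (S : set P) (b : seq P) (pi : P -> 'M[k]_(size b, 1)) :=
  forall p q v, (p <= q)%O -> S q -> fsupp b p v ->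
    (S p -> v *m pi q = v *m pi p) /\ (~ S p -> v *m pi q = 0).

(* pi exhibits k_S as the cokernel of f: the sequence
   F_a --f--> F_b --pi--> k_S --> 0 is exact (pointwise). *)
Definition is_coker_ind (S : set P) (a b : seq P)
    (f : P -> 'M[k]_(size a, size b)) (pi : P -> 'M[k]_(size b, 1)) : Prop :=
  [/\ morph_to_ind S b pi,
      (forall p, S p -> exists v, fsupp b p v /\ v *m pi p != 0) &
      (forall p v, fsupp b p v ->
         ((S p -> v *m pi p = 0) <-> exists u, fsupp a p u /\ v = u *m f p))].

Definition finitely_presented (S : set P) : Prop :=
  exists (a b : seq P) (f : P -> 'M[k]_(size a, size b))
         (pi : P -> 'M[k]_(size b, 1)),
    free_morph a b f /\ is_coker_ind S a b f pi.

End PosetReps.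

Arguments pupset {d P}.
Arguments pminset {d P}.
Arguments pcoverset {d P}.
Arguments pconvex {d P}.
Arguments finitely_presented k {d P}.

From HB Require Import structures.
From mathcomp Require Import all_boot all_order all_algebra.
From mathcomp Require Import boolp classical_sets cardinality.
Local Open Scope classical_set_scope.
Import Order.Theory GRing.Theory.

(* The image of the i-th summand k_{up b_i} in k_S is nonzero only if b_i
   lies in S, so every s in S lies above a generator b_i in S.  If c is in
   up S minus S and b_i <= c is such a generator, its basis vector is killed
   at c, hence is a combination of relations a_j <= c; were no a_j in
   up S minus S, each relation would already be killed by the projection,
   contradicting that b_i survives.  So S and up S minus S are both
   generated from below by finite lists; their minimal elements then form
   finite sets lying below every element, and convexity of S gives
   S = up (min S) minus up (cover S). *)

Lemma count_lt_subpred (T : Type) (a b : pred T) (l : seq T) :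
  subpred a b -> has (predD b a) l -> (count a l < count b l)%N.
Proof.
move=> sab; rewrite has_count -[count b l]size_filter.
rewrite -(count_predC a (filter b l)) !count_filter => ba; rewrite -addn1.
apply: leq_add; first by apply: sub_count => x /= ax; rewrite ax (sab _ ax).
by rewrite (eq_count (a2 := predD b a)) // => x /=; rewrite andbC.
Qed.

Definition up_generated {d} {P : porderType d} (l : seq P) (Q : set P) : Prop :=
  forall x, Q x -> exists2 y, y \in l & Q y /\ (y <= x)%O.

Section UpGenerated.
Context {d : Order.disp_t} {P : porderType d} {l : seq P} {Q : set P}.
Hypothesis genQ : up_generated l Q.

Lemma up_generated_pminset_sub : pminset Q `<=` [set` l].
Proof.
move=> m [Qm minm]; have [y yl [Qy ym]] := genQ _ Qm.
by rewrite /= -(minm y Qy ym).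
Qed.

(* Take [m] below [x] with the fewest elements of [l ∩ Q] below it: anything
   of [Q] strictly below [m] sits above an element of [l] with fewer. *)
Lemma up_generated_pminset_below x : Q x -> exists2 m, pminset Q m & (m <= x)%O.
Proof.
move=> Qx; pose below y := [pred z | `[< Q z >] && (z <= y)%O].
pose cand n := has (fun y => [&& `[< Q y >], (y <= x)%O & count (below y) l == n]) l.
have ex_cand : exists n, cand n.
  have [y yl [Qy yx]] := genQ _ Qx; exists (count (below y) l).
  by apply/hasP; exists y => //; rewrite asboolT // yx eqxx.
case: (ex_minnP ex_cand) => n /hasP[m ml /and3P[/asboolP Qm mx /eqP mun]] minn.
exists m => //; split=> // z Qz zm; apply: contrapT => nzm.
have [z' z'l [Qz' z'z]] := genQ _ Qz; have z'm := le_trans z'z zm.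
have : count (below m) l <= count (below z') l.
  rewrite mun; apply: minn; apply/hasP; exists z' => //.
  by rewrite asboolT // (le_trans z'm mx) eqxx.
rewrite leqNgt => /negP; apply; apply: count_lt_subpred.
  by move=> w; rewrite /below /= => /andP[-> wz']; rewrite (le_trans wz' z'm).
apply/hasP; exists m => //=; rewrite asboolT // lexx /= andbT.
apply/negP => mz'; apply: nzm; apply: le_anti.
by rewrite zm (le_trans mz' z'z).
Qed.

End UpGenerated.

Lemma pconvex_eq_upDcover d (P : porderType d) (S : set P) :
  pconvex S ->
  (forall s, S s -> exists2 m, pminset S m & (m <= s)%O) ->
  (forall c, (pupset S `\` S) c -> exists2 m, pcoverset S m & (m <= c)%O) ->
  S = pupset (pminset S) `\` pupset (pcoverset S).
Proof.
move=> convS minS coverS; apply/seteqP; split=> [s Ss|p [[m [Sm _] mp] ncov]].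
  split; first exact: minS.
  by move=> [c [[[s0 Ss0 s0c] nSc] _] cs]; apply: nSc (convS _ _ _ Ss0 Ss s0c cs).
apply: contrapT => nSp; apply: ncov.
by have [c cm cp] := coverS p (conj (ex_intro2 _ _ m Sm mp) nSp); exists c.
Qed.

Local Open Scope ring_scope.

Section SupportedVectors.
Context {k : fieldType} {d : Order.disp_t} {P : porderType d} {l : seq P}.

Lemma fsupp_delta_mx {i : 'I_(size l)} {p} :
  (tnth (in_tuple l) i <= p)%O -> fsupp k d P l p (delta_mx 0 i).
Proof.
move=> lip j; rewrite mxE eqxx /=; case: eqP => [->|//].
by rewrite -(tnth_nth p (in_tuple l)) lip.
Qed.

Lemma fsupp_le {p} {v : 'rV[k]_(size l)} {i} :
  fsupp k d P l p v -> v 0 i != 0 -> (tnth (in_tuple l) i <= p)%O.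
Proof. by move=> vp; apply: contraR; rewrite (tnth_nth p) => /vp ->. Qed.

End SupportedVectors.

Section Presentation.
Context {k : fieldType} {d : Order.disp_t} {P : porderType d} {S : set P}.
Context {a b : seq P} {f : P -> 'M[k]_(size a, size b)}.
Context { pi : P -> 'M[k]_(size b, 1) }.
Hypotheses (f_morph : free_morph k d P a b f)
  (pi_coker : is_coker_ind k d P S a b f pi).

Local Notation gen i := (tnth (in_tuple b) i).
Local Notation rel j := (tnth (in_tuple a) j).

(* The structure maps of [k_S] are identities, so on [S] every component of
   [pi] acts on the [i]-th summand by the scalar it has at the generator. *)
Definition coker_coef : 'cV[k]_(size b) :=
  \col_i (if `[< S (gen i) >] then pi (gen i) i 0 else 0).

Lemma mulmx_pi_coker_coef {p v} :
  S p -> fsupp k d P b p v -> v *m pi p = v *m coker_coef.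
Proof.
move=> Sp vp; rewrite !mulmx_sum_row; apply: eq_bigr => i _.
have [->|vi] := eqVneq (v 0 i) 0; first by rewrite !scale0r.
have [pi_nat _ _] := pi_coker.
have [pi_in pi_out] := pi_nat _ _ _ (fsupp_le vp vi) Sp (fsupp_delta_mx (lexx _)).
congr (_ *: _); apply/rowP => j; rewrite ord1 !mxE.
case: asboolP => [Sgi|nSgi]; last by move/rowP/(_ 0): (pi_out nSgi); rewrite -rowE !mxE.
by move/rowP/(_ 0): (pi_in Sgi); rewrite -!rowE !mxE.
Qed.

Lemma mulmx_coker_coef_eq0 {p v} :
  fsupp k d P b p v -> ~ pupset S p -> v *m coker_coef = 0.
Proof.
move=> vp nSp; rewrite mulmx_sum_row big1 // => i _.
have [->|vi] := eqVneq (v 0 i) 0; first by rewrite scale0r.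
apply/rowP => j; rewrite ord1 !mxE; case: asboolP => [Sgi|]; last by rewrite mulr0.
by case: nSp; exists (gen i); last exact: fsupp_le vp vi.
Qed.

Lemma coker_gen_below {s} :
  S s -> exists i, [/\ S (gen i), (gen i <= s)%O & coker_coef i 0 != 0].
Proof.
move=> Ss; have [_ pi_nz _] := pi_coker; have [v [vs]] := pi_nz s Ss.
rewrite (mulmx_pi_coker_coef Ss vs) => /eqP; apply: contra_notP => none.
rewrite mulmx_sum_row big1 // => i _.
have [->|vi] := eqVneq (v 0 i) 0; first by rewrite scale0r.
have [ci0|ci] := eqVneq (coker_coef i 0) 0.
  by apply/rowP => j; rewrite ord1 mxE [row _ _ _ _]mxE ci0 mulr0 mxE.
case: none; exists i; split=> //; last exact: fsupp_le vs vi.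
by move: ci; rewrite mxE; case: asboolP => // _; rewrite eqxx.
Qed.

Lemma mulmx_rel_coker_coef j :
  ~ (pupset S `\` S) (rel j) -> delta_mx (0 : 'I_1) j *m f (rel j) *m coker_coef = 0.
Proof.
move=> nrel; have [f_supp _] := f_morph; have [_ _ exact_at] := pi_coker.
have ej : fsupp k d P a (rel j) (delta_mx 0 j) := fsupp_delta_mx (lexx _).
have wj := f_supp _ _ ej.
have [Sj|nSj] := pselect (S (rel j)).
  rewrite -(mulmx_pi_coker_coef Sj wj).
  exact: (proj2 (exact_at _ _ wj) (ex_intro _ _ (conj ej erefl)) Sj).
by apply: mulmx_coker_coef_eq0 wj _ => upj; apply: nrel (conj upj nSj).
Qed.

Lemma coker_rel_below {c} :
  (pupset S `\` S) c -> exists j, (rel j <= c)%O /\ (pupset S `\` S) (rel j).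
Proof.
move=> [[s Ss sc] nSc]; have [i [_ gis ci]] := coker_gen_below Ss.
have [_ f_nat] := f_morph; have [_ _ exact_at] := pi_coker.
have ei : fsupp k d P b c (delta_mx 0 i) := fsupp_delta_mx (le_trans gis sc).
have [u [uc ei_u]] := proj1 (exact_at _ _ ei) (fun Sc => False_ind _ (nSc Sc)).
move/eqP: ci; apply: contra_notP => none; apply/eqP.
have /rowP/(_ 0) := congr1 (mulmx^~ coker_coef) ei_u; rewrite -rowE mxE => ->.
rewrite -mulmxA mulmx_sum_row big1 ?mxE // => j _.
have [->|uj] := eqVneq (u 0 j) 0; first by rewrite scale0r.
have ajc := fsupp_le uc uj.
rewrite row_mul rowE (f_nat _ _ _ ajc (fsupp_delta_mx (lexx _))).
by rewrite mulmx_rel_coker_coef ?scaler0 // => relj; apply: none; exists j.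
Qed.

End Presentation.

Theorem mainTheorem17 (k : fieldType) (d : Order.disp_t) (P : porderType d)
    (S : set P) :
  pconvex S -> finitely_presented k S ->
  [/\ finite_set (pminset S), finite_set (pcoverset S) &
      S = pupset (pminset S) `\` pupset (pcoverset S)].
Proof.
move=> convS [a [b [f [pi [f_morph pi_coker]]]]].
have genS : up_generated b S.
  move=> s Ss; have [i [Sgi gis _]] := coker_gen_below pi_coker Ss.
  by exists (tnth (in_tuple b) i); first exact: mem_tnth.
have genC : up_generated a (pupset S `\` S).
  move=> c Cc; have [j [ajc Caj]] := coker_rel_below f_morph pi_coker Cc.
  by exists (tnth (in_tuple a) j); first exact: mem_tnth.
split.
- exact: sub_finite_set (up_generated_pminset_sub genS) (finite_seq b).
- exact: sub_finite_set (up_generated_pminset_sub genC) (finite_seq a).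
- exact: pconvex_eq_upDcover convS (up_generated_pminset_below genS)
    (up_generated_pminset_below genC).
Qed.
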